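(* For every integer $n\geq 1$, $\mathrm{R}_3(\mathcal{B}_n)\leq \mathrm{RR}(\mathcal{B}_2:\mathcal{B}_n)\leq \mathrm{R}_3(\mathcal{B}_n)+n$.
   Context: $\mathcal{B}_N$ denotes the Boolean lattice of all subsets of $[N]$ ordered by inclusion. An induced copy of a poset $\mathcal{P}$ in a poset $\mathcal{Q}$ is the image of an injection $f:\mathcal{P}\to\mathcal{Q}$ with $f(X)\le f(Y)$ iff $X\le Y$. Monochromatic: all sets share a color; rainbow: pairwise distinct colors. $\mathrm{R}_k(\mathcal{P})$ is the smallest $n$ such that every coloring of $\mathcal{B}_n$ with $k$ colors contains a monochromatic induced copy of $\mathcal{P}$. $\mathrm{RR}(\mathcal{Q}:\mathcal{P})$ is the smallest $n$ such that every coloring (with any number of colors) of the sets of $\mathcal{B}_n$ contains a rainbow induced copy of $\mathcal{Q}$ or a monochromatic induced copy of $\mathcal{P}$. *)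

From mathcomp Require Import all_boot.
Set Implicit Arguments. Unset Strict Implicit. Unset Printing Implicit Defensive.

(* The Boolean lattice B_N is {set 'I_N} ordered by \subset. *)

Definition induced_copy (m N : nat) (f : {set 'I_m} -> {set 'I_N}) : Prop :=
  injective f /\ forall X Y : {set 'I_m}, (f X \subset f Y) = (X \subset Y).

Definition has_mono_copy (C : Type) (m N : nat) (c : {set 'I_N} -> C) : Prop :=
  exists f : {set 'I_m} -> {set 'I_N},
    induced_copy f /\ forall X Y : {set 'I_m}, c (f X) = c (f Y).

Definition has_rainbow_copy (C : Type) (m N : nat) (c : {set 'I_N} -> C) : Prop :=
  exists f : {set 'I_m} -> {set 'I_N},
    induced_copy f /\ injective (fun X => c (f X)).

Definition ramsey_prop (k m N : nat) : Prop :=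
  forall c : {set 'I_N} -> 'I_k, has_mono_copy m c.

(* Property defining RR(B_q : B_m): every coloring (any number of colors;
   colors taken in nat, which suffices since B_N is finite) of B_N has a
   rainbow copy of B_q or a monochromatic copy of B_m. *)
Definition rainbow_ramsey_prop (q m N : nat) : Prop :=
  forall c : {set 'I_N} -> nat, has_rainbow_copy q c \/ has_mono_copy m c.

Definition is_least (P : nat -> Prop) (a : nat) : Prop :=
  P a /\ forall b, P b -> a <= b.

(* Lower bound: a coloring with three colors has no rainbow copy of B_2, which has four
   elements.
   Upper bound: let N = R_3(B_n) and color B_(N+n) without rainbow copy of B_2. If all pairs
   P <= Q with |Q \ P| >= N have the same color, the sets avoiding the first N coordinates form
   a copy of B_n colored like the full set. Otherwise take such P, Q of different colors: the
   interval [P, Q] contains a copy of B_N, and 3-coloring it by "color of P", "color of Q",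
   "other" yields a copy of B_n which is monochromatic or avoids both colors. Two incomparable
   sets of [P, Q] avoiding both colors have the same color, as otherwise they would form a
   rainbow B_2 with P and Q. So for n >= 2 the copy is monochromatic except possibly at its
   bottom or top. If the bottom color differs, deleting from every other set of the copy a fixed
   element x of bottom \ P gives a copy colored like P; the top is dual under complementation.
   For n = 1 a single exchange of elements suffices. *)

From mathcomp Require Import all_boot.
From Stdlib Require Import Classical.
Set Implicit Arguments. Unset Strict Implicit. Unset Printing Implicit Defensive.

Lemma uniq_map_inj_in (T1 T2 : eqType) (f : T1 -> T2) (s : seq T1) :
  uniq (map f s) -> {in s &, injective f}.
Proof.
elim: s => //= a s IHs /andP[fa_s fs_uniq] x y /[!inE].
case/orP=> [/eqP-> | xs] /orP[/eqP-> | ys] // fxy; last exact: IHs.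
- by rewrite fxy map_f in fa_s.
- by rewrite -fxy map_f in fa_s.
Qed.

Section InducedCopies.

Variables m N : nat.
Implicit Types f : {set 'I_m} -> {set 'I_N}.

Lemma induced_copy_of_sub f :
  (forall X Y, (f X \subset f Y) = (X \subset Y)) -> induced_copy f.
Proof.
move=> f_sub; split=> // X Y fXY; apply/eqP.
by rewrite eqEsubset -!f_sub fXY subxx.
Qed.

Lemma induced_copy_comp K f (g : {set 'I_N} -> {set 'I_K}) :
  induced_copy f -> induced_copy g -> induced_copy (g \o f).
Proof.
by move=> [f_inj f_sub] [g_inj g_sub]; split=> [|X Y /=]; [exact: inj_comp | rewrite g_sub f_sub].
Qed.

Lemma has_mono_copy_comp (C : Type) K (h : {set 'I_N} -> {set 'I_K}) (c : {set 'I_K} -> C) :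
  induced_copy h -> has_mono_copy m (c \o h) -> has_mono_copy m c.
Proof.
by move=> h_copy [f [f_copy c_f]]; exists (h \o f); split; [exact: induced_copy_comp|].
Qed.

Definition dual_copy f X := ~: f (~: X).

Lemma dual_copy_sub f :
  (forall X Y, (f X \subset f Y) = (X \subset Y)) ->
  forall X Y, (dual_copy f X \subset dual_copy f Y) = (X \subset Y).
Proof. by move=> f_sub X Y; rewrite setCS f_sub setCS. Qed.

Lemma has_mono_copy_setC (C : Type) (c : {set 'I_N} -> C) :
  has_mono_copy m (fun X => c (~: X)) -> has_mono_copy m c.
Proof.
case=> f [[_ f_sub] c_f]; exists (dual_copy f); split=> [|X Y].
  exact/induced_copy_of_sub/dual_copy_sub.
exact: c_f.
Qed.

Lemma has_rainbow_copy_setC (C : Type) (c : {set 'I_N} -> C) :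
  has_rainbow_copy m (fun X => c (~: X)) -> has_rainbow_copy m c.
Proof.
case=> f [[_ f_sub] c_f]; exists (dual_copy f); split=> [|X Y /c_f/setC_inj //].
exact/induced_copy_of_sub/dual_copy_sub.
Qed.

End InducedCopies.

Section SmallCopies.

Variables (C : eqType) (N : nat) (c : {set 'I_N} -> C).

Lemma subset_ord1 (X Y : {set 'I_1}) : (X \subset Y) = ((ord0 \in X) ==> (ord0 \in Y)).
Proof.
apply/subsetP/implyP => [XY | XY i]; first exact: XY.
by rewrite (ord1 i); apply: XY.
Qed.

Lemma mono_copy_B1 (lo hi : {set 'I_N}) :
  lo \proper hi -> c lo = c hi -> has_mono_copy 1 c.
Proof.
rewrite properE => /andP[lo_hi hi_lo] c_lohi.
exists (fun X : {set 'I_1} => if ord0 \in X then hi else lo); split=> [|X Y].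
  apply: induced_copy_of_sub => X Y; rewrite subset_ord1.
  by case: (ord0 \in X); case: (ord0 \in Y); rewrite /= ?subxx ?lo_hi ?(negbTE hi_lo).
by case: (ord0 \in X); case: (ord0 \in Y).
Qed.

Lemma subset_ord2 (X Y : {set 'I_2}) : (X \subset Y) =
  ((ord0 \in X) ==> (ord0 \in Y)) && ((ord_max \in X) ==> (ord_max \in Y)).
Proof.
apply/subsetP/andP => [XY | [XY0 XY1] i]; first by split; apply/implyP; apply: XY.
have [-> | ->] : i = ord0 \/ i = ord_max.
  by case: i => -[|[|//]] ?; [left | right]; apply/val_inj.
all: exact/implyP.
Qed.

Definition diamond (p u v q : {set 'I_N}) (X : {set 'I_2}) :=
  if ord0 \in X then (if ord_max \in X then q else u)
  else (if ord_max \in X then v else p).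

Variables p u v q : {set 'I_N}.
Hypotheses (pu : p \subset u) (pv : p \subset v) (uq : u \subset q) (vq : v \subset q).
Hypotheses (uv : ~~ (u \subset v)) (vu : ~~ (v \subset u)).

Lemma diamond_sub X Y : (diamond p u v q X \subset diamond p u v q Y) = (X \subset Y).
Proof.
have pq : p \subset q := subset_trans pu uq.
have up : ~~ (u \subset p) by apply: contra uv => /subset_trans; apply.
have vp : ~~ (v \subset p) by apply: contra vu => /subset_trans; apply.
have qp : ~~ (q \subset p) by apply: contra up; apply: subset_trans.
have qu : ~~ (q \subset u) by apply: contra vu; apply: subset_trans.
have qv : ~~ (q \subset v) by apply: contra uv; apply: subset_trans.
rewrite subset_ord2 /diamond.
by case: (ord0 \in X); case: (ord_max \in X); case: (ord0 \in Y); case: (ord_max \in Y);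
  rewrite /= ?subxx ?pu ?pv ?uq ?vq ?pq ?(negbTE uv) ?(negbTE vu) ?(negbTE up)
    ?(negbTE vp) ?(negbTE qp) ?(negbTE qu) ?(negbTE qv).
Qed.

Lemma rainbow_diamond : uniq [:: c p; c u; c v; c q] -> has_rainbow_copy 2 c.
Proof.
move=> /(@uniq_map_inj_in _ _ c [:: p; u; v; q]) c_inj.
have d_copy := induced_copy_of_sub diamond_sub.
exists (diamond p u v q); split=> // X Y cXY; apply: d_copy.1; apply: c_inj cXY;
  by rewrite /diamond; case: ifP; case: ifP; rewrite !inE eqxx ?orbT.
Qed.

End SmallCopies.

Section FreshCopyInInterval.

Variables (C : eqType) (M : nat) (c : {set 'I_M} -> C).
Hypothesis no_rainbow : ~ has_rainbow_copy 2 c.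
Variables P Q : {set 'I_M}.
Hypothesis cPQ : c P != c Q.

Lemma color_neq_proper (A B : {set 'I_M}) : A \subset B -> c A != c B -> A \proper B.
Proof. by move=> AB cAB; rewrite properEneq AB andbT; apply: contraNneq cAB => ->. Qed.

Lemma uniq_fresh_colors (a b : C) :
  a \notin [:: c P; c Q] -> b \notin [:: c P; c Q] -> a != b ->
  uniq [:: c P; a; b; c Q] /\ uniq [:: c P; a; c Q; b].
Proof.
rewrite !inE !negb_or => /andP[aP aQ] /andP[bP bQ] ab.
by rewrite /= !inE !negb_or cPQ ![c P == _]eq_sym ![c Q == _]eq_sym aP aQ bP bQ ab.
Qed.

Lemma incomparable_same_color (U V : {set 'I_M}) :
  P \subset U -> P \subset V -> U \subset Q -> V \subset Q ->
  ~~ (U \subset V) -> ~~ (V \subset U) ->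
  c U \notin [:: c P; c Q] -> c V \notin [:: c P; c Q] -> c U = c V.
Proof.
move=> PU PV UQ VQ UV VU cU cV; apply/eqP/negPn/negP => cUV; apply: no_rainbow.
exact: (rainbow_diamond PU PV UQ VQ UV VU (uniq_fresh_colors cU cV cUV).1).
Qed.

Lemma mono_copy_B1_in_interval (b t : {set 'I_M}) :
  b \proper t -> P \subset b -> t \subset Q ->
  c b \notin [:: c P; c Q] -> c t \notin [:: c P; c Q] -> has_mono_copy 1 c.
Proof.
move=> /[dup] bt /proper_sub b_t Pb tQ cb ct.
have [cbt | cbt] := eqVneq (c b) (c t); first exact: mono_copy_B1 bt cbt.
have Pt := subset_trans Pb b_t; have bQ := subset_trans b_t tQ.
move: (cb) (ct); rewrite !inE !negb_or => /andP[cbP _] /andP[_ ctQ].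
have /properP[_ [x xb xP]] : P \proper b by rewrite color_neq_proper // eq_sym.
have /properP[_ [y yQ yt]] : t \proper Q by rewrite color_neq_proper.
have xt : x \in t := subsetP b_t x xb.
have yb : y \notin b by apply: contra yt; apply: subsetP b_t y.
have yP : y \notin P by apply: contra yt; apply: subsetP Pt y.
pose W := y |: (b :\ x).
have xW : x \notin W by rewrite !inE eqxx /= orbF; apply: contraNneq yt => <-.
have yW : y \in W by rewrite !inE eqxx.
have PW : P \subset W by apply: subset_trans (subsetU1 y _); rewrite subsetD1 Pb.
have WQ : W \subset Q by rewrite subUset sub1set yQ (subset_trans (subsetDl _ _) bQ).
have incomparable (Z : {set 'I_M}) : x \in Z -> y \notin Z -> ~~ (W \subset Z) && ~~ (Z \subset W).
  by move=> xZ yZ; apply/andP; split; apply/subsetPn; [exists y | exists x].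
have [cWP | cWP] := eqVneq (c W) (c P).
  apply: (mono_copy_B1 _ (esym cWP)).
  by rewrite properE PW; apply/subsetPn; exists y.
have [cWQ | cWQ] := eqVneq (c W) (c Q).
  apply: (mono_copy_B1 _ cWQ).
  by rewrite properE WQ; apply/subsetPn; exists x; rewrite ?(subsetP tQ).
have cW : c W \notin [:: c P; c Q] by rewrite !inE negb_or cWP cWQ.
have /andP[Wb bW] := incomparable b xb yb.
have /andP[Wt tW] := incomparable t xt yt.
case/eqP: cbt; rewrite -(incomparable_same_color PW Pb WQ bQ Wb bW cW cb).
exact: incomparable_same_color PW Pt WQ tQ Wt tW cW ct.
Qed.

Variables (n : nat) (F : {set 'I_n} -> {set 'I_M}).
Hypothesis F_sub : forall X Y, (F X \subset F Y) = (X \subset Y).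
Hypotheses (FP : forall Y, P \subset F Y) (FQ : forall Y, F Y \subset Q).
Hypothesis F_fresh : forall Y, c (F Y) \notin [:: c P; c Q].

Lemma singleton_color i j : c (F [set i]) = c (F [set j]).
Proof.
have [-> // | ij] := eqVneq i j.
apply: incomparable_same_color (FP _) (FP _) (FQ _) (FQ _) _ _ (F_fresh _) (F_fresh _);
  by rewrite F_sub sub1set inE // eq_sym.
Qed.

Lemma middle_color Y i : Y != set0 -> Y != setT -> c (F Y) = c (F [set i]).
Proof.
move=> /set0Pn[j jY]; rewrite -subTset => /subsetPn[k _ kY].
rewrite (singleton_color i k).
apply: incomparable_same_color (FP _) (FP _) (FQ _) (FQ _) _ _ (F_fresh _) (F_fresh _);
  rewrite F_sub ?sub1set //.
by apply/subsetPn; exists j; rewrite // inE; apply: contraNneq kY => <-.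
Qed.

Section ShiftDown.

Hypothesis bottom_distinct : forall i, c (F set0) != c (F (setT :\ i)).
Variable x : 'I_M.
Hypotheses (x_bot : x \in F set0) (x_notP : x \notin P).

Lemma mem_shift Z : x \in F Z.
Proof. by apply: subsetP x_bot; rewrite F_sub sub0set. Qed.

Lemma shift_subset Z Z' : (F Z :\ x \subset F Z') = (Z \subset Z').
Proof.
rewrite -F_sub; apply/idP/idP => [sub | ]; last exact: subset_trans (subsetDl _ _).
by rewrite -(setD1K (mem_shift Z)) subUset sub1set mem_shift.
Qed.

Lemma shift_color Y : Y != set0 -> c (F Y :\ x) = c P.
Proof.
move=> Y0; have /set0Pn[i iY] := Y0.
set W := F Y :\ x; set b := F set0; set t := F setT; set m := F (setT :\ i).
have PW : P \subset W by rewrite subsetD1 FP.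
have WQ : W \subset Q := subset_trans (subsetDl _ _) (FQ Y).
have x_out Z : ~~ (F Z \subset W) by apply/subsetPn; exists x; rewrite ?mem_shift // !inE eqxx.
have Wb : ~~ (W \subset b) by rewrite shift_subset subset0.
have Wm : ~~ (W \subset m) by rewrite shift_subset; apply/subsetPn; exists i; rewrite // !inE eqxx.
(* [W] is incomparable with [b] and [m], whose colors differ, and color [c Q] would give a
   rainbow diamond. *)
have [// | cWP] := eqVneq (c W) (c P).
have [cWQ | cWQ] := eqVneq (c W) (c Q).
  have bt : b \subset t by rewrite F_sub sub0set.
  have Wt : W \subset t by rewrite shift_subset subsetT.
  have mt : m \subset t by rewrite F_sub subsetT.
  exfalso; apply: no_rainbow.
  have [ctm | ctm] := eqVneq (c t) (c m).
    apply: (rainbow_diamond (FP _) PW bt Wt (x_out _) Wb); rewrite cWQ.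
    have cbt : c b != c t by rewrite ctm; apply: bottom_distinct.
    by case: (uniq_fresh_colors (F_fresh set0) (F_fresh setT) cbt).
  apply: (rainbow_diamond (FP _) PW mt Wt (x_out _) Wm); rewrite cWQ.
  have cmt : c m != c t by rewrite eq_sym.
  by case: (uniq_fresh_colors (F_fresh (setT :\ i)) (F_fresh setT) cmt).
have cW : c W \notin [:: c P; c Q] by rewrite !inE negb_or cWP cWQ.
case/eqP: (bottom_distinct i).
rewrite -(incomparable_same_color PW (FP _) WQ (FQ _) Wb (x_out _) cW (F_fresh _)).
exact: incomparable_same_color PW (FP _) WQ (FQ _) Wm (x_out _) cW (F_fresh _).
Qed.

Lemma mono_copy_shift_down : has_mono_copy n c.
Proof.
pose G Y := if Y == set0 then P else F Y :\ x.
have PG Y : P \subset F Y :\ x by rewrite subsetD1 FP.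
have cG Y : c (G Y) = c P by rewrite /G; case: eqP => [// | /eqP]; apply: shift_color.
exists G; split=> [|X Y]; last by rewrite !cG.
apply: induced_copy_of_sub => X Y; rewrite /G.
have [-> | X0] := eqVneq X set0; have [-> | Y0] := eqVneq Y set0; rewrite ?subxx ?sub0set ?PG //.
- rewrite subset0 (negbTE X0); apply/negbTE; apply: contra X0 => XP.
  by rewrite -subset0 -shift_subset (subset_trans XP (FP _)).
- by rewrite subsetD1 !inE eqxx andbT /= shift_subset.
Qed.

End ShiftDown.

Lemma mono_copy_of_bottom_distinct :
  (forall i, c (F set0) != c (F (setT :\ i))) -> has_mono_copy n c.
Proof.
move=> bottom_distinct; have := F_fresh set0; rewrite !inE negb_or eq_sym => /andP[cPb _].
have /properP[_ [x xb xP]] := color_neq_proper (FP set0) cPb.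
exact: (mono_copy_shift_down bottom_distinct xb xP).
Qed.

End FreshCopyInInterval.

Section MonoCopyInInterval.

Variables (C : eqType) (M : nat) (c : {set 'I_M} -> C).
Hypothesis no_rainbow : ~ has_rainbow_copy 2 c.
Variables P Q : {set 'I_M}.
Hypothesis cPQ : c P != c Q.
Variables (n : nat) (F : {set 'I_n} -> {set 'I_M}).
Hypothesis F_sub : forall X Y, (F X \subset F Y) = (X \subset Y).
Hypotheses (FP : forall Y, P \subset F Y) (FQ : forall Y, F Y \subset Q).
Hypothesis F_fresh : forall Y, c (F Y) \notin [:: c P; c Q].

Lemma mono_copy_of_top_distinct :
  (forall i, c (F setT) != c (F [set i])) -> has_mono_copy n c.
Proof.
move=> top_distinct; apply: has_mono_copy_setC.
apply: (@mono_copy_of_bottom_distinct _ _ _ _ (~: Q) (~: P) _ _ (dual_copy F)).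
- by move/has_rainbow_copy_setC.
- by rewrite !setCK eq_sym.
- exact: dual_copy_sub.
- by move=> Y; rewrite setCS.
- by move=> Y; rewrite setCS.
- by move=> Y; have := F_fresh (~: Y); rewrite /dual_copy !setCK !inE orbC.
- by move=> i; rewrite /dual_copy !setCK setC0 setCD setCT set0U; apply: top_distinct.
Qed.

Lemma mono_copy_in_interval : 0 < n -> has_mono_copy n c.
Proof.
move=> n_gt0; pose i0 := Ordinal n_gt0.
have F_proper : F set0 \proper F setT.
  by rewrite properE !F_sub sub0set subset0; apply/set0Pn; exists i0.
have [n1 | n_neq1] := eqVneq n 1.
  by rewrite n1; apply: (mono_copy_B1_in_interval no_rainbow cPQ F_proper).
have mid := middle_color no_rainbow cPQ F_sub FP FQ F_fresh.
have sing := singleton_color no_rainbow cPQ F_sub FP FQ F_fresh.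
have [ctg | top_distinct] := eqVneq (c (F setT)) (c (F [set i0])); last first.
  by apply: mono_copy_of_top_distinct => i; rewrite (sing i i0).
have [cbg | bottom_distinct] := eqVneq (c (F set0)) (c (F [set i0])); last first.
  apply: (mono_copy_of_bottom_distinct no_rainbow cPQ F_sub FP FQ F_fresh) => i.
  rewrite (mid (setT :\ i) i0) //.
    apply: contra n_neq1 => /eqP Ti; have := cardsD1 i [set: 'I_n].
    by rewrite Ti cards0 in_setT cardsT card_ord => ->.
  by apply/eqP => /setP /(_ i); rewrite !inE eqxx.
exists F; split; first exact: induced_copy_of_sub.
suff cF Y : c (F Y) = c (F [set i0]) by move=> X Y; rewrite !cF.
have [-> // | Y0] := eqVneq Y set0; have [-> // | YT] := eqVneq Y setT.
exact: mid.
Qed.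

End MonoCopyInInterval.

Section ProductCopies.

Variables a b : nat.

Definition set_lrshift (X : {set 'I_a}) (Z : {set 'I_b}) : {set 'I_(a + b)} :=
  lshift b @: X :|: @rshift a b @: Z.

Lemma mem_set_lrshift_lshift X Z i : (lshift b i \in set_lrshift X Z) = (i \in X).
Proof.
rewrite inE mem_imset; last exact: lshift_inj.
by case: (i \in X) => //=; apply/imsetP => -[j _ /eqP]; rewrite eq_lrshift.
Qed.

Lemma mem_set_lrshift_rshift X Z j : (@rshift a b j \in set_lrshift X Z) = (j \in Z).
Proof.
rewrite inE (mem_imset _ _ (@rshift_inj a b)) orbC.
by case: (j \in Z) => //=; apply/imsetP => -[i _ /eqP]; rewrite eq_rlshift.
Qed.

Lemma set_lrshift_subset X Z X' Z' :
  (set_lrshift X Z \subset set_lrshift X' Z') = (X \subset X') && (Z \subset Z').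
Proof.
apply/idP/andP => [sub | [XX' ZZ']]; last exact: setUSS (imsetS _ XX') (imsetS _ ZZ').
split; apply/subsetP => i.
  by rewrite -(mem_set_lrshift_lshift X Z) -(mem_set_lrshift_lshift X' Z'); apply: subsetP.
by rewrite -(mem_set_lrshift_rshift X Z) -(mem_set_lrshift_rshift X' Z'); apply: subsetP.
Qed.

End ProductCopies.

Lemma subset_initial_segment k i j : i <= k ->
  ([set z : 'I_k | z < i] \subset [set z : 'I_k | z < j]) = (i <= j).
Proof.
move=> ik; apply/subsetP/idP => [sub | ij z]; last by rewrite !inE => /leq_trans; apply.
rewrite leqNgt; apply/negP => ji.
by have := sub (Ordinal (leq_trans ji ik)); rewrite !inE /= ji ltnn => /(_ isT).
Qed.

Definition restr_max n (Y : {set 'I_n.+1}) : {set 'I_n} := [set i | lift ord_max i \in Y].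

Lemma subset_restr_max n (Y Y' : {set 'I_n.+1}) : (Y \subset Y') =
  (restr_max Y \subset restr_max Y') && ((ord_max \in Y) ==> (ord_max \in Y')).
Proof.
apply/idP/andP => [sub | [rsub msub]].
  by split; [apply/subsetP => i; rewrite !inE; apply: subsetP | apply/implyP; apply: subsetP].
apply/subsetP => i; case: (unliftP ord_max i) => [j -> | ->]; last exact/implyP.
by have := subsetP rsub j; rewrite !inE.
Qed.

Lemma induced_copy_succ n N K (f : {set 'I_n} -> {set 'I_N}) (lo hi : {set 'I_K}) :
  induced_copy f -> lo \proper hi ->
  induced_copy (fun Y => set_lrshift (f (restr_max Y)) (if ord_max \in Y then hi else lo)).
Proof.
rewrite properE => -[_ f_sub] /andP[lo_hi hi_lo].
apply: induced_copy_of_sub => Y Y'; rewrite set_lrshift_subset f_sub [RHS]subset_restr_max.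
by case: (ord_max \in Y); case: (ord_max \in Y');
  rewrite /= ?subxx ?lo_hi ?(negbTE hi_lo) ?andbT ?andbF.
Qed.

Lemma pigeonhole_ord (C : finType) m (v : 'I_m -> C) :
  #|C| < m -> exists i j : 'I_m, i < j /\ v i = v j.
Proof.
move=> Cm; have /injectivePn[i [j ij vij]] : ~~ injectiveb v.
  by apply: contraL Cm => /injectiveP/leq_card; rewrite card_ord -leqNgt.
have [lt | gt | eq] := ltngtP i j.
- by exists i, j.
- by exists j, i.
- by case/eqP: ij; apply: val_inj.
Qed.

Lemma ramsey_exists (C : finType) n :
  exists N, forall c : {set 'I_N} -> C, has_mono_copy n c.
Proof.
elim: n C => [|n IHn] C.
  exists 0 => c; have e0 (X : {set 'I_0}) : X = set0 by apply/setP => -[].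
  exists id; split=> // [|X Y]; last by rewrite (e0 X) (e0 Y).
  by apply: induced_copy_of_sub => X Y; rewrite (e0 X) (e0 Y).
set k := #|C|; have [N HN] := IHn {ffun 'I_k.+1 -> C}.
(* Color X by the colors of the sets X x S_j, for the k + 1 initial segments S_j of B_k; on a
   copy of B_n monochromatic for this coloring, two of the S_j give the same color. *)
exists (N + k) => c; pose seg (j : 'I_k.+1) : {set 'I_k} := [set z : 'I_k | z < j].
have [f [f_copy cf]] := HN (fun X => [ffun j => c (set_lrshift X (seg j))]).
pose v j := c (set_lrshift (f set0) (seg j)).
have [i [j [ij vij]]] := pigeonhole_ord v (ltnSn k).
have c_seg X l : c (set_lrshift (f X) (seg l)) = v l.
  by have := congr1 (fun w : {ffun _ -> C} => w l) (cf X set0); rewrite !ffunE.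
exists (fun Y => set_lrshift (f (restr_max Y)) (if ord_max \in Y then seg j else seg i)); split.
  apply: induced_copy_succ f_copy _.
  by rewrite properE !subset_initial_segment -?ltnNge ?(ltnW ij) // -ltnS.
suff cY Y : c (set_lrshift (f (restr_max Y)) (if ord_max \in Y then seg j else seg i)) = v i.
  by move=> X Y; rewrite !cY.
by case: (ord_max \in Y); rewrite c_seg.
Qed.

Lemma mono_copy_of_large_intervals (C : Type) N n (c : {set 'I_(N + n)} -> C) :
  (forall P Q : {set 'I_(N + n)}, P \subset Q -> N <= #|Q :\: P| -> c P = c Q) ->
  has_mono_copy n c.
Proof.
move=> c_large; exists (set_lrshift set0); split.
  by apply: induced_copy_of_sub => X Y; rewrite set_lrshift_subset subxx.
suff cT Y : c (set_lrshift set0 Y) = c setT by move=> X Y; rewrite !cT.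
apply: c_large; first exact: subsetT.
rewrite -{1}(card_ord N) -cardsT -(card_imset _ (@lshift_inj N n)) subset_leq_card //.
apply/subsetP => _ /imsetP[i _ ->].
by rewrite in_setD mem_set_lrshift_lshift in_set0 in_setT.
Qed.

Lemma interval_copy M N (P Q : {set 'I_M}) : P \subset Q -> N <= #|Q :\: P| ->
  exists h : {set 'I_N} -> {set 'I_M}, [/\ forall X Y, (h X \subset h Y) = (X \subset Y),
    forall X, P \subset h X & forall X, h X \subset Q].
Proof.
move=> PQ large; pose e (i : 'I_N) := enum_val (widen_ord large i).
have e_inj : injective e by move=> i j /enum_val_inj [] /val_inj.
have eD i : e i \in Q :\: P := enum_valP _.
exists (fun X : {set 'I_N} => P :|: e @: X); split=> [X Y | X | X].
- apply/idP/idP => [sub | XY]; last exact/setUS/imsetS.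
  apply/subsetP => i iX; have := eD i; rewrite inE => /andP[eiP _].
  by have := subsetP sub (e i); rewrite !inE (negbTE eiP) !mem_imset //= => /(_ iX).
- exact: subsetUl.
- rewrite subUset PQ; apply/subsetP => _ /imsetP[i _ ->].
  by have := eD i; rewrite inE => /andP[].
Qed.

Lemma mono_copy_or_avoiding (C : eqType) (s : seq C) n N (d : {set 'I_N} -> C) :
  ramsey_prop (size s).+1 n N ->
  has_mono_copy n d \/
  exists f : {set 'I_n} -> {set 'I_N}, induced_copy f /\ forall Y, d (f Y) \notin s.
Proof.
move=> ramsey; pose cls v : 'I_(size s).+1 := Ordinal (index_size v s : index v s < (size s).+1).
have [f [f_copy cf]] := ramsey (fun X => cls (d X)).
have idx Y : index (d (f Y)) s = index (d (f set0)) s := congr1 val (cf Y set0).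
have [s_f0 | s_f0] := boolP (d (f set0) \in s); [left | right]; exists f; split=> //.
  suff dZ Z : d (f Z) = d (f set0) by move=> X Y; rewrite !dZ.
  have s_fZ : d (f Z) \in s by rewrite -index_mem idx index_mem.
  by rewrite -(nth_index (d (f Z)) s_fZ) idx nth_index.
by move=> Y; rewrite -index_mem idx index_mem.
Qed.

Lemma rainbow_ramsey_upper N n : 0 < n ->
  ramsey_prop 3 n N -> rainbow_ramsey_prop 2 n (N + n).
Proof.
move=> n_gt0 ramseyN c.
have [rainbow | no_rainbow] := classic (has_rainbow_copy 2 c); [by left | right].
have [/existsP[P /existsP[Q /and3P[PQ large cPQ]]] | small] :=
  boolP [exists P : {set 'I_(N + n)}, exists Q : {set 'I_(N + n)},
           [&& P \subset Q, N <= #|Q :\: P| & c P != c Q]].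
  have [h [h_sub hP hQ]] := interval_copy PQ large.
  have [mono | [f [[_ f_sub] f_fresh]]] :=
    mono_copy_or_avoiding (s := [:: c P; c Q]) (c \o h) ramseyN.
    exact: has_mono_copy_comp (induced_copy_of_sub h_sub) mono.
  apply: (mono_copy_in_interval no_rainbow cPQ (F := h \o f)) => // [X Y | X | X].
  - by rewrite /= h_sub f_sub.
  - exact: hP.
  - exact: hQ.
apply: mono_copy_of_large_intervals => P Q PQ large; apply/eqP.
by move/existsPn: small => /(_ P) /existsPn /(_ Q); rewrite PQ large negbK.
Qed.

Lemma rainbow_ramsey_lower n N : rainbow_ramsey_prop 2 n N -> ramsey_prop 3 n N.
Proof.
move=> rr c; case: (rr (fun X => val (c X))) => [[f [_ c_inj]] | [f [f_copy cf]]].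
  have /leq_card : injective (fun X => c (f X)) by move=> X Y /(congr1 val) /c_inj.
  by rewrite card_ord -cardsT -powersetT card_powerset cardsT card_ord.
by exists f; split=> // X Y; apply: val_inj; exact: cf.
Qed.

Lemma exists_least (P : nat -> Prop) : (exists n, P n) -> exists m, is_least P m.
Proof.
case=> n; elim: n {-2}n (leqnn n) => [|n IHn] m mn Pm.
  by exists m; split=> // b _; move: mn; rewrite leqn0 => /eqP ->.
have [[b [bm Pb]] | no_smaller] := classic (exists b, b < m /\ P b).
  by apply: (IHn b) => //; rewrite -ltnS (leq_trans bm mn).
by exists m; split=> // b Pb; rewrite leqNgt; apply/negP => bm; apply: no_smaller; exists b.
Qed.

Theorem theorem1p6 (n : nat) (hn : 1 <= n) :
  exists r rr : nat,
    is_least (ramsey_prop 3 n) r /\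
    is_least (rainbow_ramsey_prop 2 n) rr /\
    r <= rr /\ rr <= r + n.
Proof.
have [r [ramsey_r r_least]] : exists r, is_least (ramsey_prop 3 n) r.
  by apply: exists_least; have [N ramseyN] := ramsey_exists 'I_3 n; exists N.
have [rr [rr_prop rr_least]] : exists rr, is_least (rainbow_ramsey_prop 2 n) rr.
  by apply: exists_least; exists (r + n); apply: rainbow_ramsey_upper.
exists r, rr; do !split=> //.
- exact/r_least/rainbow_ramsey_lower.
- exact/rr_least/rainbow_ramsey_upper.
Qed.
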